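(* The $\mathbf k$-linear map $\varphi:\mathrm{WCQSym}\to\mathrm{QSym}$, defined by $\varphi(M_\alpha)=(-1)^{\ell_\varepsilon(\alpha)}M_{\bar\alpha}$ if $\alpha\in\mathcal C_N$ and $\varphi(M_\alpha)=0$ if $\alpha\in\mathcal C_\varepsilon$, is a coalgebra homomorphism, i.e. $\Delta_{\mathbb N}\circ\varphi=(\varphi\otimes\varphi)\circ\Delta_W$ and $\epsilon_{\mathbb N}\circ\varphi=\epsilon_W$.
   Context: $\tilde{\mathbb N}=\mathbb N\cup\{\varepsilon\}$ with $0+\varepsilon=\varepsilon+\varepsilon=\varepsilon$ and $n+\varepsilon=n$ for integers $n\ge1$. $\mathbf{k}$ is a commutative ring containing $\mathbb Q$; $\mathbf{k}[[X]]_{\tilde{\mathbb N}}$, $X=\{x_1<x_2<\cdots\}$, is the algebra of possibly infinite linear combinations of formal monomials $\prod x_i^{f(x_i)}$ with $f$ finitely supported $\tilde{\mathbb N}$-valued. An $\tilde{\mathbb N}$-composition is a finite (possibly empty) sequence of elements of $\{\varepsilon,1,2,\dots\}$; $M_{(\alpha_1,\dots,\alpha_k)}=\sum_{1\le i_1<\cdots<i_k}x_{i_1}^{\alpha_1}\cdots x_{i_k}^{\alpha_k}$, $M_\emptyset=1$. $\mathrm{WCQSym}$ is the free $\mathbf k$-module spanned by all $M_\alpha$, with coproduct $\Delta_W(M_{(\alpha_1,\dots,\alpha_k)})=\sum_{i=0}^kM_{(\alpha_1,\dots,\alpha_i)}\otimes M_{(\alpha_{i+1},\dots,\alpha_k)}$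 and counit $\epsilon_W(M_\alpha)=\delta_{\alpha,\emptyset}$; $\mathrm{QSym}$ is the span of the $M_\alpha$ with all entries positive integers, with coproduct $\Delta_{\mathbb N}$ and counit $\epsilon_{\mathbb N}$ given by the same formulas. $\ell_\varepsilon(\alpha)$ is the number of entries equal to $\varepsilon$, $\bar\alpha$ is $\alpha$ with its $\varepsilon$ entries deleted. $\mathcal C_\varepsilon$ is the set of $\tilde{\mathbb N}$-compositions with first entry $\varepsilon$, $\mathcal C_N$ the set of all others (including the empty one). *)

(* with multinomials' monoid-algebra [{malg R[K]}] used as
   the free R-module on a (choice) basis type K. *)
From HB Require Import structures.
From mathcomp Require Import all_boot all_order all_algebra.
From mathcomp Require Import finmap.
From mathcomp.multinomials Require Import monalg.
Unset Strict Implicit. Unset Printing Implicit Defensive.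
Import Order.TTheory GRing.Theory Num.Theory.
Local Open Scope ring_scope.

Definition pnat := {n : nat | (0 < n)%N}.
(* an entry of an N~-composition: None = epsilon, Some n = positive integer n *)
Definition entry := option pnat.
Definition eps : entry := None.
Definition wcomp := seq entry.
Definition qcomp := seq pnat.

Definition WCQSym (k : comUnitRingType) := {malg k[wcomp]}.
Definition QSym (k : comUnitRingType) := {malg k[qcomp]}.
(* tensor products of free modules = free modules on pairs of basis elements *)
Definition WCQSym2 (k : comUnitRingType) := {malg k[(wcomp * wcomp)%type]}.
Definition QSym2 (k : comUnitRingType) := {malg k[(qcomp * qcomp)%type]}.

Definition M {k : comUnitRingType} {B : choiceType} (a : B) : {malg k[B]} := << a >>.

Definition linext {k : comUnitRingType} {A B : choiceType}
  (f : A -> {malg k[B]}) (x : {malg k[A]}) : {malg k[B]} :=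
  \sum_(a <- msupp x) x@_a *: f a.
Definition linextk {k : comUnitRingType} {A : choiceType}
  (f : A -> k) (x : {malg k[A]}) : k :=
  \sum_(a <- msupp x) x@_a * f a.
Definition tens {k : comUnitRingType} {A B : choiceType}
  (x : {malg k[A]}) (y : {malg k[B]}) : {malg k[(A * B)%type]} :=
  \sum_(a <- msupp x) \sum_(b <- msupp y) (x@_a * y@_b) *: M (a, b).

Definition ell_eps (a : wcomp) : nat := count_mem eps a.
Definition bar (a : wcomp) : qcomp := pmap id a.
Definition in_Ceps (a : wcomp) : bool :=
  if a is x :: _ then x == eps else false.

Definition phiB (k : comUnitRingType) (a : wcomp) : QSym k :=
  if in_Ceps a then 0 else (-1) ^+ ell_eps a *: M (bar a).
Definition phi (k : comUnitRingType) (x : WCQSym k) : QSym k := linext (phiB k) x.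

Definition DeltaWB (k : comUnitRingType) (a : wcomp) : WCQSym2 k :=
  \sum_(i < (size a).+1) M (take i a, drop i a).
Definition DeltaNB (k : comUnitRingType) (a : qcomp) : QSym2 k :=
  \sum_(i < (size a).+1) M (take i a, drop i a).
Definition DeltaW (k : comUnitRingType) (x : WCQSym k) : WCQSym2 k := linext (DeltaWB k) x.
Definition DeltaN (k : comUnitRingType) (x : QSym k) : QSym2 k := linext (DeltaNB k) x.
Definition epsW (k : comUnitRingType) (x : WCQSym k) : k :=
  linextk (fun a : wcomp => (a == [::])%:R) x.
Definition epsN (k : comUnitRingType) (x : QSym k) : k :=
  linextk (fun a : qcomp => (a == [::])%:R) x.

Definition phi2 (k : comUnitRingType) (x : WCQSym2 k) : QSym2 k :=
  linext (fun p : wcomp * wcomp => tens (phi k (M p.1)) (phi k (M p.2))) x.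

(* Both sides of each identity are linear in x, so it suffices to compare them
   on a basis element M_a.  If a lies in C_eps, every cut of a has a factor
   in C_eps (the left part, or for the empty cut the right part), so both
   sides vanish.  Otherwise the sign (-1)^(ell_eps a) splits multiplicatively
   over any cut, the cuts whose right part starts with an epsilon are killed
   by phi, and the remaining cuts of a correspond to the cuts of bar a. *)

From HB Require Import structures.
From mathcomp Require Import all_boot all_order all_algebra.
From mathcomp Require Import finmap.
From mathcomp.multinomials Require Import monalg.
Import GRing.Theory.

Local Open Scope fset_scope.
Local Open Scope ring_scope.

Section LinearExtension.
Variables (k : comUnitRingType) (A B : choiceType).

Lemma malgUZ (c : k) (a : A) : << c *g a >> = c *: (M a : {malg k[A]}).
Proof. by apply/malgP => b; rewrite mcoeffZ !mcoeffU mulr_natr. Qed.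

Lemma malg_linear_eq (V : zmodType) (s : GRing.Scale.law k V)
    (g h : {linear {malg k[A]} -> V | s}) :
  (forall a, g (M a) = h (M a)) -> g =1 h.
Proof.
move=> gh x; rewrite (monalgE x) !raddf_sum; apply: eq_bigr => a _.
rewrite malgUZ; apply: etrans (linearZ_LR g _ _) _.
by rewrite gh; apply/esym/linearZ_LR.
Qed.

Lemma linextEw (f : A -> {malg k[B]}) {x : {malg k[A]}} {d : {fset A}} :
  msupp x `<=` d -> linext f x = \sum_(a <- d) x@_a *: f a.
Proof.
move=> le; rewrite /linext (big_fset_incl _ le) // => a _ /mcoeff_outdom ->.
by rewrite scale0r.
Qed.

Lemma linext_is_linear (f : A -> {malg k[B]}) : linear (linext f).
Proof.
move=> c x y; pose d := msupp x `|` msupp y.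
have le_xd : msupp x `<=` d by apply: fsubsetUl.
have le_yd : msupp y `<=` d by apply: fsubsetUr.
have le_Dd : msupp (c *: x + y) `<=` d.
  exact: fsubset_trans (msuppD_le _ _) (fsetSU _ (msuppZ_le _ _)).
rewrite !(linextEw f le_Dd, linextEw f le_xd, linextEw f le_yd) scaler_sumr.
rewrite -big_split; apply: eq_bigr => a _.
by rewrite mcoeffD mcoeffZ scalerDl scalerA.
Qed.

HB.instance Definition _ (f : A -> {malg k[B]}) :=
  GRing.isLinear.Build k {malg k[A]} {malg k[B]} *:%R (linext f)
    (linext_is_linear f).

Lemma linextM (f : A -> {malg k[B]}) (a : A) : linext f (M a) = f a.
Proof. by rewrite (linextEw f msuppU_le) big_seq_fset1 mcoeffUU scale1r. Qed.

Lemma linextkEw (f : A -> k) {x : {malg k[A]}} {d : {fset A}} :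
  msupp x `<=` d -> linextk f x = \sum_(a <- d) x@_a * f a.
Proof.
move=> le; rewrite /linextk (big_fset_incl _ le) // => a _ /mcoeff_outdom ->.
by rewrite mul0r.
Qed.

Lemma linextk_is_scalar (f : A -> k) : scalar (linextk f).
Proof.
move=> c x y; pose d := msupp x `|` msupp y.
have le_xd : msupp x `<=` d by apply: fsubsetUl.
have le_yd : msupp y `<=` d by apply: fsubsetUr.
have le_Dd : msupp (c *: x + y) `<=` d.
  exact: fsubset_trans (msuppD_le _ _) (fsetSU _ (msuppZ_le _ _)).
rewrite !(linextkEw f le_Dd, linextkEw f le_xd, linextkEw f le_yd) mulr_sumr.
rewrite -big_split; apply: eq_bigr => a _.
by rewrite mcoeffD mcoeffZ mulrDl mulrA.
Qed.

HB.instance Definition _ (f : A -> k) :=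
  GRing.isLinear.Build k {malg k[A]} k *%R (linextk f) (linextk_is_scalar f).

Lemma linextkM (f : A -> k) (a : A) : linextk f (M a) = f a.
Proof. by rewrite (linextkEw f msuppU_le) big_seq_fset1 mcoeffUU mul1r. Qed.

Lemma tens0l (y : {malg k[B]}) : tens (0 : {malg k[A]}) y = 0.
Proof. by rewrite /tens msupp0 big_nil. Qed.

Lemma tens0r (x : {malg k[A]}) : tens x (0 : {malg k[B]}) = 0.
Proof. by rewrite /tens msupp0 big1 // => a _; rewrite big_nil. Qed.

Lemma tensZM (c d : k) (a : A) (b : B) :
  tens (c *: M a) (d *: M b) = (c * d) *: (M (a, b) : {malg k[(A * B)%type]}).
Proof.
have le_a : msupp (c *: (M a : {malg k[A]})) `<=` [fset a].
  exact: fsubset_trans (msuppZ_le _ _) msuppU_le.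
have le_b : msupp (d *: (M b : {malg k[B]})) `<=` [fset b].
  exact: fsubset_trans (msuppZ_le _ _) msuppU_le.
rewrite /tens (big_fset_incl _ le_a); last first.
  by move=> a' _ /mcoeff_outdom ->; apply: big1 => b' _; rewrite mul0r scale0r.
rewrite big_seq_fset1 (big_fset_incl _ le_b); last first.
  by move=> b' _ /mcoeff_outdom ->; rewrite mulr0 scale0r.
by rewrite big_seq_fset1 !mcoeffZ !mcoeffUU !mulr1.
Qed.

End LinearExtension.

Arguments malg_linear_eq {k A V s}.

Lemma in_Ceps_take (i : nat) (a : wcomp) :
  in_Ceps (take i a) = (0 < i)%N && in_Ceps a.
Proof. by case: a => [|x a]; case: i. Qed.

Lemma ell_eps_cut (i : nat) (a : wcomp) :
  (ell_eps (take i a) + ell_eps (drop i a))%N = ell_eps a.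
Proof. by rewrite /ell_eps -count_cat cat_take_drop. Qed.

(* Deleting the epsilons maps the cuts of [a] whose right part does not start
   with an epsilon bijectively onto the cuts of [bar a]. *)
Lemma sum_cuts_bar (V : nmodType) (F : qcomp * qcomp -> V) (a : wcomp) :
  \sum_(i < (size a).+1)
     (if in_Ceps (drop i a) then 0 else F (bar (take i a), bar (drop i a)))
  = \sum_(i < (size (bar a)).+1) F (take i (bar a), drop i (bar a)).
Proof.
elim: a F => [|x a IHa] F; first by rewrite !big_ord_recl !big_ord0.
rewrite big_ord_recl /=; under eq_bigr => i _ do rewrite add0n.
case: x => [p|] /=; last by rewrite add0r IHa.
rewrite [RHS]big_ord_recl; congr (_ + _).
rewrite (IHa (fun q => F (p :: q.1, q.2))) /=.
by apply: eq_bigr => i _; rewrite add0n.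
Qed.

Section BasisComputations.
Variable k : comUnitRingType.

Lemma phiB_Ceps (a : wcomp) : in_Ceps a -> phiB k a = 0.
Proof. by rewrite /phiB => ->. Qed.

Lemma tens_phiB_cut (a : wcomp) (i : nat) : ~~ in_Ceps a ->
  tens (phiB k (take i a)) (phiB k (drop i a)) =
  if in_Ceps (drop i a) then 0
  else (-1) ^+ ell_eps a *: M (bar (take i a), bar (drop i a)).
Proof.
move=> aN; rewrite {1}/phiB in_Ceps_take (negbTE aN) andbF.
case: ifP => [/phiB_Ceps -> | dN]; first by rewrite tens0r.
by rewrite /phiB dN tensZM -exprD ell_eps_cut.
Qed.

Lemma DeltaN_phiB (a : wcomp) : DeltaN k (phiB k a) = phi2 k (DeltaWB k a).
Proof.
rewrite /phi2 /DeltaWB raddf_sum /=.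
under eq_bigr => i _ do rewrite linextM /phi !linextM /=.
have [aC | aN] := boolP (in_Ceps a).
  rewrite phiB_Ceps // /DeltaN raddf0; apply/esym/big1 => -[[|i] _] _ /=.
    by rewrite drop0 (phiB_Ceps _ aC) tens0r.
  by rewrite phiB_Ceps ?tens0l // in_Ceps_take.
under eq_bigr => i _ do rewrite tens_phiB_cut //.
rewrite (sum_cuts_bar _ (fun q => (-1) ^+ ell_eps a *: (M q : QSym2 k))).
by rewrite /phiB (negbTE aN) /DeltaN linearZ_LR /= linextM /DeltaNB scaler_sumr.
Qed.

Lemma epsN_phiB (a : wcomp) : epsN k (phiB k a) = (a == [::])%:R.
Proof.
rewrite /phiB /epsN; case: a => [|[p|] a] /=; last by rewrite raddf0.
  by rewrite linearZ_LR /= linextkM expr0 mul1r.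
by rewrite linearZ_LR /= linextkM mulr0.
Qed.

End BasisComputations.

Theorem lemma3p7 (k : comUnitRingType)
  (hQ : forall n : nat, (n.+1)%:R \is a @GRing.unit k) :
  (forall x : WCQSym k, DeltaN k (phi k x) = phi2 k (DeltaW k x)) /\
  (forall x : WCQSym k, epsN k (phi k x) = epsW k x).
Proof.
have DeltaM a : DeltaN k (phi k (M a)) = phi2 k (DeltaW k (M a)).
  by rewrite /phi /DeltaW !linextM DeltaN_phiB.
have epsM a : epsN k (phi k (M a)) = epsW k (M a).
  by rewrite /phi /epsW linextM linextkM epsN_phiB.
split.
  exact: (malg_linear_eq (DeltaN k \o phi k) (phi2 k \o DeltaW k) DeltaM).
exact: (malg_linear_eq (epsN k \o phi k) (epsW k) epsM).
Qed.
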